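(* Let $R \subseteq \mathbb{N}$ be computably enumerable and let $A \subseteq \mathbb{N}$ be bi-immune. Then the symmetric difference $A \oplus R = (A - R) \cup (R - A)$ is bi-immune.
   Context: $\mathbb{N}$ denotes the non-negative integers; $\overline{A} = \mathbb{N} - A$. A set $A \subseteq \mathbb{N}$ is immune if (i) $A$ is infinite, and (ii) for every infinite computably enumerable set $R \subseteq \mathbb{N}$, $R \cap \overline{A} \neq \emptyset$ (i.e. $A$ contains no infinite c.e. subset). $A$ is bi-immune if both $A$ and $\overline{A}$ are immune. *)

From Stdlib Require Import List Arith.
Import ListNotations.

Inductive recf : nat -> Type :=
| rzero (n : nat) : recf n
| rsucc : recf 1
| rproj (n i : nat) : recf n                       (* i-th argument (0-based) *)
| rcomp (n m : nat) (f : recf m) (gs : recfs n m) : recf n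
| rprec (n : nat) (g : recf n) (h : recf (S (S n))) : recf (S n)
| rmu (n : nat) (f : recf (S n)) : recf n
with recfs : nat -> nat -> Type :=
| rnil (n : nat) : recfs n 0
| rcons (n m : nat) (g : recf n) (gs : recfs n m) : recfs n (S m).

Inductive evalf : forall n, recf n -> list nat -> nat -> Prop :=
| ev_zero n xs : evalf n (rzero n) xs 0
| ev_succ x : evalf 1 rsucc [x] (S x)
| ev_proj n i xs : i < n -> evalf n (rproj n i) xs (nth i xs 0)
| ev_comp n m f gs xs ys v :
    evals n m gs xs ys -> evalf m f ys v -> evalf n (rcomp n m f gs) xs v
| ev_prec0 n g h xs v :
    evalf n g xs v -> evalf (S n) (rprec n g h) (0 :: xs) v
| ev_precS n g h y xs w v :
    evalf (S n) (rprec n g h) (y :: xs) w ->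
    evalf (S (S n)) h (y :: w :: xs) v ->
    evalf (S n) (rprec n g h) (S y :: xs) v
| ev_mu n f xs y :
    evalf (S n) f (y :: xs) 0 ->
    (forall z, z < y -> exists k, evalf (S n) f (z :: xs) (S k)) ->
    evalf n (rmu n f) xs y
with evals : forall n m, recfs n m -> list nat -> list nat -> Prop :=
| evs_nil n xs : evals n 0 (rnil n) xs []
| evs_cons n m g gs xs y ys :
    evalf n g xs y -> evals n m gs xs ys ->
    evals n (S m) (rcons n m g gs) xs (y :: ys).

Definition ce (R : nat -> Prop) : Prop :=
  exists f : recf 1, forall x, R x <-> exists v, evalf 1 f [x] v.

Definition infinite_set (A : nat -> Prop) : Prop :=
  forall n, exists m, n <= m /\ A m.

Definition compl (A : nat -> Prop) : nat -> Prop := fun x => ~ A x.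

Definition immune (A : nat -> Prop) : Prop :=
  infinite_set A /\
  forall R, ce R -> infinite_set R -> exists x, R x /\ compl A x.

Definition bi_immune (A : nat -> Prop) : Prop :=
  immune A /\ immune (compl A).

Definition symdiff (A R : nat -> Prop) : nat -> Prop :=
  fun x => (A x /\ ~ R x) \/ (R x /\ ~ A x).

(* The heart of the proof is a one-sided statement: if A and its complement
   are both immune and R is c.e., then A (+) R is immune.
   - A (+) R is infinite: beyond any bound n, either A - R has an element, or
     A is eventually contained in R; then R is an infinite c.e. set, so by
     immunity of A it has infinitely many elements outside A, i.e. in R - A.
   - No infinite c.e. W lies inside A (+) R: if W /\ R is infinite it is an
     infinite c.e. set, so immunity of ~A yields x in W /\ R /\ A, outside
     A (+) R; otherwise W /\ R is empty beyond some n, and immunity of A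
     applied to the infinite c.e. set W /\ [n, oo) yields x in W, not in A
     and not in R.
   Both steps need that c.e. sets are closed under intersection and contain
   the final segments [n, oo); these are established first by exhibiting
   explicit partial recursive functions.  The theorem then follows by
   applying the one-sided statement to A and to ~A, using that
   (~A) (+) R = ~(A (+) R). *)

From Stdlib Require Import List Arith Lia Eqdep_dec Classical.
Import ListNotations.

(* Inverting [evalf]/[evals] produces equalities of dependent pairs indexed
   by arities; since equality on [nat] is decidable they can be turned into
   plain equalities. *)
Ltac inj_arity := repeat match goal with H : existT _ _ _ = existT _ _ _ |- _ =>
  apply inj_pair2_eq_dec in H; [|exact Nat.eq_dec] end; subst.

Lemma inv_comp n m f gs xs v : evalf n (rcomp n m f gs) xs v ->
  exists ys, evals n m gs xs ys /\ evalf m f ys v.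
Proof. intros H; inversion H; subst; inj_arity; eauto. Qed.

Lemma inv_nil n xs ys : evals n 0 (rnil n) xs ys -> ys = [].
Proof. intros H; inversion H; subst; inj_arity; auto. Qed.

Lemma inv_cons n m g gs xs ys : evals n (S m) (rcons n m g gs) xs ys ->
  exists y ys', ys = y :: ys' /\ evalf n g xs y /\ evals n m gs xs ys'.
Proof. intros H; inversion H; subst; inj_arity; eauto. Qed.

Lemma inv_proj n i xs v : evalf n (rproj n i) xs v -> v = nth i xs 0.
Proof. intros H; inversion H; subst; inj_arity; auto. Qed.

Lemma inv_zero n xs v : evalf n (rzero n) xs v -> v = 0.
Proof. intros H; inversion H; subst; inj_arity; auto. Qed.

Lemma inv_succ xs v : evalf 1 rsucc xs v -> exists x, xs = [x] /\ v = S x.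
Proof. intros H; inversion H; subst; inj_arity; eauto. Qed.

Lemma inv_prec0 n g h xs v :
  evalf (S n) (rprec n g h) (0 :: xs) v -> evalf n g xs v.
Proof. intros H; inversion H; subst; inj_arity; auto. Qed.

Lemma inv_precS n g h y xs v : evalf (S n) (rprec n g h) (S y :: xs) v ->
  exists w, evalf (S n) (rprec n g h) (y :: xs) w /\
            evalf (S (S n)) h (y :: w :: xs) v.
Proof. intros H; inversion H; subst; inj_arity; eauto. Qed.

Lemma inv_mu n f xs y : evalf n (rmu n f) xs y -> evalf (S n) f (y :: xs) 0.
Proof. intros H; inversion H; subst; inj_arity; auto. Qed.

Lemma inv_comp1 n f g xs v : evalf n (rcomp n 1 f (rcons n 0 g (rnil n))) xs v ->
  exists w, evalf n g xs w /\ evalf 1 f [w] v.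
Proof.
  intros H. apply inv_comp in H as [ys [Hys Hf]].
  apply inv_cons in Hys as [w [ys' [-> [Hg Hnil]]]].
  apply inv_nil in Hnil; subst. eauto.
Qed.

(* Closure of c.e. sets under intersection: the function [x |-> 0] computed
   after evaluating both [f x] and [g x] converges iff both do. *)
Definition rboth (f g : recf 1) : recf 1 :=
  rcomp 1 2 (rzero 2) (rcons 1 1 f (rcons 1 0 g (rnil 1))).

Lemma ce_inter P Q : ce P -> ce Q -> ce (fun x => P x /\ Q x).
Proof.
  intros [f Hf] [g Hg]. exists (rboth f g). intros x. split.
  - intros [HP HQ]. apply Hf in HP as [a Ha]. apply Hg in HQ as [b Hb].
    exists 0. econstructor; [|constructor].
    econstructor; [exact Ha|]. econstructor; [exact Hb|]. constructor.
  - intros [v Hv]. apply inv_comp in Hv as [ys [Hys _]].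
    apply inv_cons in Hys as [a [ys' [_ [Ha Hys]]]].
    apply inv_cons in Hys as [b [ys'' [_ [Hb _]]]].
    split; [apply Hf | apply Hg]; eauto.
Qed.

Fixpoint rconst (k : nat) : recf 0 :=
  match k with
  | 0 => rzero 0
  | S k => rcomp 0 1 rsucc (rcons 0 0 (rconst k) (rnil 0))
  end.

Lemma rconst_spec k v : evalf 0 (rconst k) [] v <-> v = k.
Proof.
  split.
  - revert v; induction k as [|k IH]; simpl; intros v H.
    + exact (inv_zero _ _ _ H).
    + apply inv_comp1 in H as [w [Hw H]]. apply inv_succ in H as [x [Hx ->]].
      injection Hx as ->. f_equal; auto.
  - intros ->. induction k as [|k IH]; simpl; [constructor|].
    econstructor; [econstructor; [exact IH|constructor]|constructor].
Qed.

Definition rpred : recf 1 := rprec 0 (rzero 0) (rproj 2 0).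

Lemma rpred_spec x v : evalf 1 rpred [x] v <-> v = Nat.pred x.
Proof.
  split.
  - destruct x; intros H.
    + apply inv_prec0, inv_zero in H; auto.
    + apply inv_precS in H as [w [_ H]]. apply inv_proj in H; auto.
  - intros ->. induction x as [|x IH].
    + do 2 constructor.
    + econstructor; [exact IH|].
      change x with (nth 0 [x; Nat.pred x] 0) at 2. constructor; lia.
Qed.

Definition rsub (n : nat) : recf 1 :=
  rprec 0 (rconst n) (rcomp 2 1 rpred (rcons 2 0 (rproj 2 1) (rnil 2))).

Lemma rsub_spec n x v : evalf 1 (rsub n) [x] v <-> v = n - x.
Proof.
  split.
  - revert v; induction x as [|x IH]; intros v H.
    + apply inv_prec0, rconst_spec in H. lia.
    + apply inv_precS in H as [w [Hw H]]. apply IH in Hw; subst w.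
      apply inv_comp1 in H as [a [Ha H]]. apply inv_proj in Ha; simpl in Ha; subst.
      apply rpred_spec in H. lia.
  - intros ->. induction x as [|x IH].
    + rewrite Nat.sub_0_r. constructor. apply rconst_spec; reflexivity.
    + econstructor; [exact IH|]. econstructor.
      * econstructor; [|constructor].
        change (n - x) with (nth 1 [x; n - x] 0). constructor; lia.
      * apply rpred_spec. simpl. lia.
Qed.

(* Final segments are c.e.: minimising [y |-> n - x] (which ignores [y])
   terminates, with result 0, exactly when [n - x = 0]. *)
Definition rfrom (n : nat) : recf 1 :=
  rmu 1 (rcomp 2 1 (rsub n) (rcons 2 0 (rproj 2 1) (rnil 2))).

Lemma ce_from n : ce (fun x => n <= x).
Proof.
  exists (rfrom n). intros x. split.
  - intros Hx. exists 0. constructor; [|intros; lia].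
    econstructor.
    + econstructor; [apply (ev_proj 2 1 [0; x]); lia|constructor].
    + apply rsub_spec. simpl. lia.
  - intros [v Hv]. apply inv_mu, inv_comp1 in Hv as [a [Ha H]].
    apply inv_proj in Ha; simpl in Ha; subst.
    apply rsub_spec in H. lia.
Qed.

Lemma ce_above W n : ce W -> ce (fun x => W x /\ n <= x).
Proof. intros HW. exact (ce_inter _ _ HW (ce_from n)). Qed.

Lemma infinite_above W n : infinite_set W -> infinite_set (fun x => W x /\ n <= x).
Proof.
  intros HW k. destruct (HW (max n k)) as [m [Hm Wm]].
  exists m. split; [lia|]. split; [exact Wm|lia].
Qed.

Lemma infinite_eventually_incl P Q n :
  infinite_set P -> (forall m, n <= m -> P m -> Q m) -> infinite_set Q.
Proof.
  intros HP HPQ k. destruct (HP (max n k)) as [m [Hm Pm]].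
  exists m. split; [lia|]. apply HPQ; [lia|exact Pm].
Qed.

Lemma not_infinite_bounded P :
  ~ infinite_set P -> exists n, forall m, n <= m -> ~ P m.
Proof.
  intros HP. apply NNPP. intros Hunb. apply HP. intros n.
  apply NNPP. intros Hn. apply Hunb. exists n. intros m Hm Pm.
  apply Hn. exists m; auto.
Qed.

(* Immunity, strengthened: an infinite c.e. set has not just one but
   infinitely many elements outside an immune set, since each of its
   final segments is again infinite and c.e. *)
Lemma immune_infinite_outside B W : immune B -> ce W -> infinite_set W ->
  infinite_set (fun x => W x /\ compl B x).
Proof.
  intros [_ HB] HW Hinf n.
  destruct (HB _ (ce_above W n HW) (infinite_above W n Hinf))
    as [x [[Wx Hx] Bx]].
  exists x. auto.
Qed.

Lemma immune_ext A B : (forall x, A x <-> B x) -> immune A -> immune B.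
Proof.
  intros E [Hinf HA]. split.
  - intros n. destruct (Hinf n) as [m [? ?]]. exists m. split; [auto|apply E; auto].
  - intros W HW HWinf. destruct (HA W HW HWinf) as [x [Wx Ax]].
    exists x. split; [exact Wx|]. intros Bx. apply Ax, E, Bx.
Qed.

Lemma symdiff_compl A R x : symdiff (compl A) R x <-> compl (symdiff A R) x.
Proof. unfold symdiff, compl. destruct (classic (A x)); tauto. Qed.

Lemma symdiff_infinite R A :
  ce R -> immune A -> infinite_set (symdiff A R).
Proof.
  intros HR HA n.
  destruct (classic (exists m, n <= m /\ A m /\ ~ R m)) as [[m [Hm [Am nRm]]]|Hno].
  - exists m. split; [exact Hm|]. left; auto.
  - assert (Rinf : infinite_set R).
    { apply (infinite_eventually_incl A R n (proj1 HA)). intros m Hm Am.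
      apply NNPP. intros nRm. apply Hno. eauto. }
    destruct (immune_infinite_outside A R HA HR Rinf n) as [m [Hm [Rm nAm]]].
    exists m. split; [exact Hm|]. right; auto.
Qed.

Lemma symdiff_meets_compl R A W : ce R -> immune A -> immune (compl A) ->
  ce W -> infinite_set W -> exists x, W x /\ compl (symdiff A R) x.
Proof.
  intros HR HA HcA HW HWinf.
  destruct (classic (infinite_set (fun x => W x /\ R x))) as [HWR|HWR].
  - destruct (proj2 HcA _ (ce_inter W R HW HR) HWR) as [x [[Wx Rx] nnAx]].
    exists x. split; [exact Wx|]. unfold compl, symdiff in *. tauto.
  - destruct (not_infinite_bounded _ HWR) as [n Hn].
    destruct (proj2 HA _ (ce_above W n HW) (infinite_above W n HWinf))
      as [x [[Wx Hx] nAx]].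
    specialize (Hn x Hx).
    exists x. split; [exact Wx|]. unfold compl, symdiff in *. tauto.
Qed.

Lemma symdiff_immune R A :
  ce R -> immune A -> immune (compl A) -> immune (symdiff A R).
Proof.
  intros HR HA HcA. split.
  - exact (symdiff_infinite R A HR HA).
  - intros W HW HWinf. exact (symdiff_meets_compl R A W HR HA HcA HW HWinf).
Qed.

Theorem lemma2p3 (R A : nat -> Prop) :
  ce R -> bi_immune A -> bi_immune (symdiff A R).
Proof.
  intros HR [HA HcA].
  assert (HccA : immune (compl (compl A))).
  { apply (immune_ext A); [|exact HA].
    intros x. unfold compl. split; [tauto|apply NNPP]. }
  split.
  - exact (symdiff_immune R A HR HA HcA).
  - apply (immune_ext (symdiff (compl A) R)); [apply symdiff_compl|].
    exact (symdiff_immune R (compl A) HR HcA HccA).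
Qed.
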